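(* If $\gamma<\frac14$ and $|\mu_r-\mu_s|\ge c\frac{\phi_\ast}{n_s}$ for all $r\ne s$, then $$\rho^s_{in}\le\frac{2}{(1-4\gamma)c}\quad\text{and}\quad\rho^s_{out}\le\frac{2}{(1-4\gamma)c}.$$
   Context: Points $x_1,\dots,x_N$ are real numbers, each drawn from one of $\beta$ distributions with distinct means $\mu_1,\dots,\mu_\beta$; $\mathcal T_s$ is the set of points from distribution $s$, $n_s=|\mathcal T_s|$; $\phi_\ast=\sum_i|x_i-\mathbb{E}(x_i)|$; $c>0$ a constant. $\nu_1,\dots,\nu_\beta$ are real cluster centers and $S_r=\{x_i:|x_i-\nu_r|\le|x_i-\nu_s|\ \forall s\}$. $\Delta_s=|\mu_s-\nu_s|$, $\gamma=\max_{s,\,r\ne s}\frac{\Delta_s}{|\mu_r-\mu_s|}$. $\rho^s_{in}=\frac{\sum_{r\ne s}|\mathcal T_r\cap S_s|}{n_s}$ (fraction of points misclassified into cluster $s$) and $\rho^s_{out}=\frac{\sum_{r\ne s}|\mathcal T_s\cap S_r|}{n_s}$ (fraction of points of $\mathcal T_s$ misclassified). *)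

From mathcomp Require Import all_boot all_order all_algebra.
Set Implicit Arguments. Unset Strict Implicit. Unset Printing Implicit Defensive.
Import Order.TTheory GRing.Theory Num.Theory.
Local Open Scope ring_scope.

Section Clustering.
Variables (R : realFieldType) (N beta : nat).
(* x : the points; lab i : index of the distribution point i is drawn from;
   mu : the means; nu : the cluster centers. *)
Variables (x : 'I_N -> R) (lab : 'I_N -> 'I_beta) (mu nu : 'I_beta -> R).

Definition Tset (s : 'I_beta) : {set 'I_N} := [set i | lab i == s].
Definition nsize (s : 'I_beta) : R := #|Tset s|%:R.
Definition Sset (r : 'I_beta) : {set 'I_N} :=
  [set i | [forall t, `|x i - nu r| <= `|x i - nu t|]].
(* phi_* = sum_i |x_i - E(x_i)|, with E(x_i) = mu_(lab i) *)
Definition phi_star : R := \sum_(i < N) `|x i - mu (lab i)|.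
Definition Delta (s : 'I_beta) : R := `|mu s - nu s|.
Definition gamma : R :=
  \big[Num.max/0]_(s < beta) \big[Num.max/0]_(r < beta | r != s)
     (Delta s / `|mu r - mu s|).
Definition rho_in (s : 'I_beta) : R :=
  (\sum_(r < beta | r != s) #|Tset r :&: Sset s|%:R) / nsize s.
Definition rho_out (s : 'I_beta) : R :=
  (\sum_(r < beta | r != s) #|Tset s :&: Sset r|%:R) / nsize s.
End Clustering.

From mathcomp Require Import all_boot all_order all_algebra.
From mathcomp Require Import ring lra.

Set Implicit Arguments.
Unset Strict Implicit.
Unset Printing Implicit Defensive.

Import Order.TTheory GRing.Theory Num.Theory.
Local Open Scope ring_scope.

(* Write D = |mu_r - mu_s|; by definition of gamma each center lies within
   gamma D of its mean.  A point of T_r that is at least as close to nu_s as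
   to nu_r is therefore at distance >= (1 - 4 gamma) D / 2 from mu_r, so every
   misclassified point contributes that much to phi_*.  Since D >= c phi_*/n_s,
   counting the misclassified points against phi_* gives the bound.  For
   rho_out a point of T_s may lie in two cells S_a, S_b at once (a tie); it is
   then the midpoint of nu_a and nu_b, one of which is no farther from nu_s than
   the point itself, and this makes the point pay twice as much.  When
   phi_* = 0 the same count against a positive lower bound of the separations
   shows that no point is misclassified. *)

Lemma ler_normB_or_normD (R : realDomainType) (u w : R) :
  `|u| <= `|w| -> `|w - u| <= `|w| \/ `|w + u| <= `|w|.
Proof.
case: (lerP 0 u) => hu; case: (lerP 0 w) => hw;
  rewrite ?(ger0_norm hu) ?(ger0_norm hw) ?(ltr0_norm hu) ?(ltr0_norm hw) => h;
  [left | right | right | left]; rewrite ler_norml; lra.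
Qed.

Lemma misassigned_far_from_mean (R : realFieldType) (x na nb ma mb g : R) :
  `|x - nb| <= `|x - na| ->
  `|ma - na| <= g * `|ma - mb| -> `|mb - nb| <= g * `|ma - mb| ->
  (1 - 4 * g) * `|ma - mb| <= 2 * `|x - ma|.
Proof.
move=> hx ha hb.
have := ler_distD x ma mb; have := ler_distD nb x mb; have := ler_distD ma x na.
have := distrC ma x; have := distrC nb mb; have := normr_ge0 (ma - na).
lra.
Qed.

Lemma near_center_far_from_mean (R : realFieldType) (x ns nt ms mt g : R) :
  `|nt - ns| <= `|x - ns| ->
  `|ms - ns| <= g * `|ms - mt| -> `|mt - nt| <= g * `|ms - mt| ->
  (1 - 4 * g) * `|ms - mt| <= `|x - ms|.
Proof.
move=> hx hs ht.
have := ler_distD ns ms mt; have := ler_distD nt ns mt; have := ler_distD ms x ns.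
have := distrC ns nt; have := distrC nt mt; have := normr_ge0 (mt - nt).
lra.
Qed.

Lemma sum_card_exchange (R : pzSemiRingType) (I J : finType) (Q : pred J)
    (A : J -> {set I}) :
  \sum_(j | Q j) (#|A j|%:R : R) = \sum_i #|[set j | Q j && (i \in A j)]|%:R.
Proof.
have card_sum (T : finType) (B : {set T}) : #|B|%:R = \sum_(t in B) 1 :> R.
  by rewrite sumr_const.
under eq_bigr do rewrite card_sum.
under [RHS]eq_bigr do rewrite card_sum.
rewrite (exchange_big_dep predT) //=.
by apply: eq_bigr => i _; apply: eq_bigl => j; rewrite inE.
Qed.

Lemma exists_pos_lbound (R : realDomainType) (I : finType) (P : pred I)
    (F : I -> R) :
  (forall i, P i -> 0 < F i) -> exists2 K, 0 < K & forall i, P i -> K <= F i.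
Proof.
move=> F_gt0; exists (\big[Num.min/1]_(i | P i) F i) => [|i Pi].
  by elim/big_ind: _ => // u v u_gt0 v_gt0; rewrite lt_min u_gt0.
exact: bigmin_le_cond.
Qed.

Section NearestCenter.
Variables (R : realFieldType) (N beta : nat) (x : 'I_N -> R) (nu : 'I_beta -> R).

Lemma SsetP i r :
  reflect (forall t, `|x i - nu r| <= `|x i - nu t|) (i \in Sset x nu r).
Proof. by rewrite inE; apply: forallP. Qed.

Hypothesis nu_inj : injective nu.

Lemma Sset_midpoint i a b : a != b ->
  i \in Sset x nu a -> i \in Sset x nu b -> nu a + nu b = 2 * x i.
Proof.
move=> ab /SsetP Sa /SsetP Sb.
have : `|x i - nu a| == `|x i - nu b| by rewrite eq_le Sa Sb.
rewrite eqr_norm2 => /orP[/eqP e | /eqP e]; last by lra.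
by exfalso; move/eqP: ab; apply; apply: nu_inj; lra.
Qed.

Lemma card_Sset_le2 i : (#|[set r | i \in Sset x nu r]| <= 2)%N.
Proof.
rewrite leqNgt; apply/card_gt2P => -[a [b [c [[Sa Sb Sc] [ab bc ca]]]]].
rewrite in_set in Sa; rewrite in_set in Sb; rewrite in_set in Sc.
have := Sset_midpoint ab Sa Sb; have := Sset_midpoint ca Sc Sa => eca eab.
by move/eqP: bc; apply; apply: nu_inj; lra.
Qed.

Lemma Sset_midpoint_near i a b t : a != b ->
  i \in Sset x nu a -> i \in Sset x nu b ->
  `|nu a - nu t| <= `|x i - nu t| \/ `|nu b - nu t| <= `|x i - nu t|.
Proof.
move=> ab Sa Sb; have mid := Sset_midpoint ab Sa Sb.
have /ler_normB_or_normD : `|x i - nu a| <= `|x i - nu t| by exact/SsetP.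
have -> : x i - nu t - (x i - nu a) = nu a - nu t by ring.
by have -> : x i - nu t + (x i - nu a) = nu b - nu t by lra.
Qed.

End NearestCenter.

Section Separation.
Variables (R : realFieldType) (N beta : nat) (x : 'I_N -> R).
Variables (lab : 'I_N -> 'I_beta) (mu nu : 'I_beta -> R).
Hypothesis mu_inj : injective mu.
Local Notation g := (gamma mu nu).

Lemma dist_means_gt0 a b : a != b -> 0 < `|mu a - mu b|.
Proof. by move=> ab; rewrite normr_gt0 subr_eq0 (inj_eq mu_inj). Qed.

Lemma Delta_le_gamma a b : a != b -> Delta mu nu a <= g * `|mu a - mu b|.
Proof.
move=> ab; rewrite -ler_pdivrMr ?dist_means_gt0 // distrC.
apply: le_trans (le_bigmax _ _ a).
by apply: (le_bigmax_cond _ (P := fun r => r != a)); rewrite eq_sym.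
Qed.

Lemma centers_inj : g < 1 / 2 -> injective nu.
Proof.
move=> g_lt a b nu_ab; case: (eqVneq a b) => // ab; exfalso.
have ba : b != a by rewrite eq_sym.
have := Delta_le_gamma ab; have := Delta_le_gamma ba.
rewrite /Delta (distrC (mu b) (mu a)).
have : g * `|mu a - mu b| < 1 / 2 * `|mu a - mu b| by rewrite ltr_pM2r ?dist_means_gt0.
have := ler_distD (nu a) (mu a) (mu b); rewrite nu_ab (distrC (nu b)).
lra.
Qed.

Lemma in_Tset i r : (i \in Tset lab r) = (lab i == r).
Proof. by rewrite inE. Qed.

Lemma Sset_far_from_mean i a b : a != b -> i \in Sset x nu b ->
  (1 - 4 * g) * `|mu a - mu b| <= 2 * `|x i - mu a|.
Proof.
move=> ab /SsetP Sb; have ba : b != a by rewrite eq_sym.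
apply: (misassigned_far_from_mean (Sb a)); first exact: (Delta_le_gamma ab).
by rewrite (distrC (mu a)); exact: (Delta_le_gamma ba).
Qed.

Lemma Sset_midpoint_far_from_mean (g_lt : g < 1 / 2) i a b s :
  a != b -> a != s -> b != s -> i \in Sset x nu a -> i \in Sset x nu b ->
  exists2 t, t != s & (1 - 4 * g) * `|mu s - mu t| <= `|x i - mu s|.
Proof.
move=> ab a_s b_s Sa Sb.
have far t : t != s -> `|nu t - nu s| <= `|x i - nu s| ->
    (1 - 4 * g) * `|mu s - mu t| <= `|x i - mu s|.
  move=> t_s near; have s_t : s != t by rewrite eq_sym.
  apply: (near_center_far_from_mean near); first exact: (Delta_le_gamma s_t).
  by rewrite (distrC (mu s)); exact: (Delta_le_gamma t_s).
have [near | near] := Sset_midpoint_near (centers_inj g_lt) s ab Sa Sb.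
  by exists a => //; apply: far.
by exists b => //; apply: far.
Qed.

Section Counting.
Variables (s : 'I_beta) (K : R).
Hypothesis g_le : g <= 1 / 4.
Hypothesis K_le : forall r, r != s -> K <= `|mu r - mu s|.

Let weight_ge0 : 0 <= 1 - 4 * g.
Proof. move: g_le; lra. Qed.

Let g_lt_half : g < 1 / 2.
Proof. move: g_le; lra. Qed.

Lemma misclassified_in_le i :
  #|[set r | (r != s) && (i \in Tset lab r :&: Sset x nu s)]|%:R
    * ((1 - 4 * g) * K) <= 2 * `|x i - mu (lab i)|.
Proof.
set A := [set r | _].
have memA r : r \in A -> [/\ r != s, lab i = r & i \in Sset x nu s].
  by rewrite in_set in_setI in_Tset => /and3P[? /eqP ? ?].
have A_le1 : (#|A| <= 1)%N.
  by apply/card_le1_eqP => r r' /memA[_ <- _] /memA[_ <- _].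
have [A0 | A_gt0] := posnP #|A|; first by rewrite A0 mul0r mulr_ge0.
have [r /memA[r_s -> Ss]] := card_gt0P A_gt0.
rewrite (@anti_leq #|A| 1) ?A_le1 // mul1r.
apply: le_trans (Sset_far_from_mean r_s Ss).
by rewrite ler_wpM2l // K_le.
Qed.

Lemma misclassified_out_le i :
  #|[set r | (r != s) && (i \in Tset lab s :&: Sset x nu r)]|%:R
    * ((1 - 4 * g) * K) <= 2 * `|x i - mu (lab i)|.
Proof.
set A := [set r | _].
have memA r : r \in A -> [/\ r != s, lab i = s & i \in Sset x nu r].
  by rewrite in_set in_setI in_Tset => /and3P[? /eqP ? ?].
have A_le2 : (#|A| <= 2)%N.
  apply: leq_trans (card_Sset_le2 x (centers_inj g_lt_half) i).
  by apply/subset_leq_card/subsetP => r /memA[_ _ Sr]; rewrite in_set.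
have [A0 | A_gt0] := posnP #|A|; first by rewrite A0 mul0r mulr_ge0.
have [r /memA[r_s -> Sr]] := card_gt0P A_gt0.
have [A_le1 | A_gt1] := leqP #|A| 1.
  rewrite (@anti_leq #|A| 1) ?A_le1 // mul1r.
  have s_r : s != r by rewrite eq_sym.
  apply: le_trans (Sset_far_from_mean s_r Sr).
  by rewrite ler_wpM2l // distrC K_le.
have [a [b [/memA[a_s _ Sa] /memA[b_s _ Sb] ab]]] := card_gt1P A_gt1.
have [t t_s far] := Sset_midpoint_far_from_mean g_lt_half ab a_s b_s Sa Sb.
rewrite (@anti_leq #|A| 2) ?A_le2 // ler_wpM2l //.
by apply: le_trans far; rewrite ler_wpM2l // distrC K_le.
Qed.

Lemma count_in_le :
  (\sum_(r < beta | r != s) #|Tset lab r :&: Sset x nu s|%:R)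
    * ((1 - 4 * g) * K) <= 2 * phi_star x lab mu.
Proof.
rewrite sum_card_exchange mulr_suml /phi_star mulr_sumr.
by apply: ler_sum => i _; exact: misclassified_in_le.
Qed.

Lemma count_out_le :
  (\sum_(r < beta | r != s) #|Tset lab s :&: Sset x nu r|%:R)
    * ((1 - 4 * g) * K) <= 2 * phi_star x lab mu.
Proof.
rewrite sum_card_exchange mulr_suml /phi_star mulr_sumr.
by apply: ler_sum => i _; exact: misclassified_out_le.
Qed.

End Counting.

Lemma ratio_le_of_count s c cnt : 0 < c -> g < 1 / 4 ->
  (forall r, r != s -> c * phi_star x lab mu / nsize R lab s <= `|mu r - mu s|) ->
  0 <= cnt ->
  (forall K, (forall r, r != s -> K <= `|mu r - mu s|) ->
     cnt * ((1 - 4 * g) * K) <= 2 * phi_star x lab mu) ->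
  cnt / nsize R lab s <= 2 / ((1 - 4 * g) * c).
Proof.
move=> c_gt0 g_lt sep cnt_ge0 cnt_le.
have weight_gt0 : 0 < 1 - 4 * g by lra.
have bound_gt0 : 0 < 2 / ((1 - 4 * g) * c) by rewrite divr_gt0 ?mulr_gt0.
have [n0 | n_neq0] := eqVneq (nsize R lab s) 0.
  by rewrite n0 invr0 mulr0 ltW.
have n_gt0 : 0 < nsize R lab s by rewrite lt_def n_neq0 ler0n.
have phi_ge0 : 0 <= phi_star x lab mu by apply: sumr_ge0 => i _.
have [phi_gt0 | phi_le0] := ltrP 0 (phi_star x lab mu).
  rewrite ler_pdivlMr ?mulr_gt0 // -(ler_pM2r phi_gt0).
  have := cnt_le _ sep.
  set phi := phi_star _ _ _; set n := nsize _ _ _; set a := 1 - 4 * g.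
  have -> : cnt / n * (a * c) * phi = cnt * (a * (c * phi / n)) by ring.
  lra.
have [K K_gt0 K_le] : exists2 K, 0 < K & forall r, r != s -> K <= `|mu r - mu s|.
  by apply: exists_pos_lbound => r; exact: dist_means_gt0.
have := cnt_le K K_le; set w := (1 - 4 * g) * K.
have w_gt0 : 0 < w by rewrite mulr_gt0.
move=> cnt_w; have -> : cnt = 0 by nra.
by rewrite mul0r ltW.
Qed.

End Separation.

Theorem lemma9 (R : realFieldType) (N beta : nat)
  (x : 'I_N -> R) (lab : 'I_N -> 'I_beta) (mu nu : 'I_beta -> R) (c : R)
  (hc : 0 < c) (hmu : injective mu) (s : 'I_beta)
  (hgamma : gamma mu nu < 1 / 4)
  (hsep : forall r : 'I_beta, r != s ->
     `|mu r - mu s| >= c * phi_star x lab mu / nsize R lab s) :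
  rho_in x lab nu s <= 2 / ((1 - 4 * gamma mu nu) * c) /\
  rho_out x lab nu s <= 2 / ((1 - 4 * gamma mu nu) * c).
Proof.
have g_le : gamma mu nu <= 1 / 4 by exact: ltW.
have count_ge0 (F : 'I_beta -> nat) : 0 <= \sum_(r < beta | r != s) (F r)%:R :> R.
  by apply: sumr_ge0 => r _.
split; apply: (ratio_le_of_count hmu hc hgamma hsep (count_ge0 _)) => K K_le.
  exact: count_in_le.
exact: count_out_le.
Qed.
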